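(* Let $I,J\in\mathbb C$ with $4I^3-J^2\ne0$. Then the affine subvariety $Z_{I,J}$ of $\mathbb A^5_{\mathbb C}$ (with coordinates $a,b,c,d,e$) defined by \[ I=12ae-3bd+c^2,\qquad J=72ace+9bcd-27ad^2-27b^2e-2c^3 \] contains no lines, i.e. there is no set $\{(\alpha,\beta,\gamma,\delta,\epsilon)+t(A,B,C,D,E): t\in\mathbb C\}$ with $(\alpha,\beta,\gamma,\delta,\epsilon)\in\mathbb C^5$ and $(A,B,C,D,E)\in\mathbb C^5\setminus\{\mathbf 0\}$ contained in $Z_{I,J}$. *)

From mathcomp Require Import all_boot all_order all_algebra.
From mathcomp Require Import complex.
From mathcomp Require Import Rstruct.
From Stdlib Require Import Reals.
Set Implicit Arguments. Unset Strict Implicit. Unset Printing Implicit Defensive.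
Import GRing.Theory Num.Theory.
Local Open Scope ring_scope.

Notation CC := (complex Rdefinitions.R).

(* The invariants I and J of the binary quartic with coefficients a,b,c,d,e. *)
Definition invI (a b c d e : CC) : CC := 12 * a * e - 3 * b * d + c ^+ 2.
Definition invJ (a b c d e : CC) : CC :=
  72 * a * c * e + 9 * b * c * d - 27 * a * d ^+ 2 - 27 * b ^+ 2 * e - 2 * c ^+ 3.

Definition inZ (I J : CC) (a b c d e : CC) : Prop :=
  invI a b c d e = I /\ invJ a b c d e = J.

From mathcomp Require Import all_boot all_order all_algebra.
From mathcomp Require Import complex Rstruct.
From mathcomp Require Import ring.

Set Implicit Arguments.
Unset Strict Implicit.
Unset Printing Implicit Defensive.

Import GRing.Theory Num.Theory.

Local Open Scope ring_scope.

(* Write (a, b, c, d, e) for the binary quartic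
   a x^4 + b x^3 y + c x^2 y^2 + d x y^3 + e y^4, whose SL_2-invariants are
   invI and invJ.  Along a line p + t v in Z_{I,J} the leading coefficients in
   t of I and J are I(v) and J(v), so v is a null form.  The unimodular
   substitutions y -> y + r x, x -> x + s y and (x, y) -> (y, -x) map lines of
   Z_{I,J} to lines; moving a root of v to (1 : 0) and clearing one more
   coefficient brings v to (0, B, 0, 0, 0) or (0, 0, 0, D, E).  Then the
   coefficients of I and J along the line that must vanish force the base
   point to have a double root at x = 0 or y = 0, where 4 I^3 = J^2. *)

Lemma cubic_const_coefs (R : numDomainType) (k c0 c1 c2 c3 : R) :
  (forall t, c0 + c1 * t + c2 * t ^+ 2 + c3 * t ^+ 3 = k) ->
  [/\ c1 = 0, c2 = 0 & c3 = 0].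
Proof.
move=> f; have f0 := f 0; have f1 := f 1; have fN1 := f (-1); have f2 := f 2.
(* third and second finite differences at -1, 0, 1, 2 *)
have c3_0 : c3 = 0.
  have /eqP : 6 * c3 = 0.
    by rewrite -(subrr (k + 3 * k)) -{1}f2 -{1}f0 -{1}fN1 -f1; ring.
  by rewrite mulf_eq0 pnatr_eq0 => /eqP.
have c2_0 : c2 = 0.
  have /eqP : 2 * c2 = 0.
    by rewrite -(subrr (k + k)) -{1}f1 -{1}fN1 -f0 c3_0; ring.
  by rewrite mulf_eq0 pnatr_eq0 => /eqP.
split=> //; rewrite -(subrr k) -{1}f1 -f0 c2_0 c3_0; ring.
Qed.

Lemma natr_mulf_eq0 (R : numDomainType) (n : nat) (x y : R) :
  (0 < n)%N -> x != 0 -> n%:R * x * y = 0 -> y = 0.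
Proof.
move=> n_gt0 /negbTE x_neq0 /eqP.
by rewrite !mulf_eq0 pnatr_eq0 x_neq0 eqn0Ngt n_gt0 => /eqP.
Qed.

Lemma quartic_has_root (F : closedFieldType) (A B C D E : F) :
  E != 0 -> exists r, A + B * r + C * r ^+ 2 + D * r ^+ 3 + E * r ^+ 4 = 0.
Proof.
move=> E_neq0.
have [r r4] := @solve_monicpoly F 4 (fun i => - nth 0 [:: A; B; C; D] i / E) isT.
by exists r; rewrite r4 !big_ord_recr big_ord0 /=; field.
Qed.

Section LinesInZ.

Variables I J : CC.

Definition line_in_Z (a b c d e A B C D E : CC) : Prop :=
  forall t, inZ I J (a + t * A) (b + t * B) (c + t * C) (d + t * D) (e + t * E).

Lemma line_in_Z_null_dir a b c d e A B C D E :
  line_in_Z a b c d e A B C D E -> invI A B C D E = 0 /\ invJ A B C D E = 0.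
Proof.
move=> L; have [I0 J0] := L 0; have [I1 J1] := L 1; have [IN1 JN1] := L (-1).
have [_ J2] := L 2.
split.
- have /eqP : 2 * invI A B C D E = 0.
    by rewrite -(subrr (I + I)) -{1}I1 -{1}IN1 -I0 /invI; ring.
  by rewrite mulf_eq0 pnatr_eq0 => /eqP.
- have /eqP : 6 * invJ A B C D E = 0.
    by rewrite -(subrr (J + 3 * J)) -{1}J2 -{1}J0 -{1}JN1 -J1 /invJ; ring.
  by rewrite mulf_eq0 pnatr_eq0 => /eqP.
Qed.

Lemma line_in_Z_shear_y r a b c d e A B C D E :
  line_in_Z a b c d e A B C D E ->
  line_in_Z (a + b * r + c * r ^+ 2 + d * r ^+ 3 + e * r ^+ 4)
    (b + 2 * c * r + 3 * d * r ^+ 2 + 4 * e * r ^+ 3)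
    (c + 3 * d * r + 6 * e * r ^+ 2) (d + 4 * e * r) e
    (A + B * r + C * r ^+ 2 + D * r ^+ 3 + E * r ^+ 4)
    (B + 2 * C * r + 3 * D * r ^+ 2 + 4 * E * r ^+ 3)
    (C + 3 * D * r + 6 * E * r ^+ 2) (D + 4 * E * r) E.
Proof.
by move=> L t; have [LI LJ] := L t; split; [rewrite -LI /invI | rewrite -LJ /invJ]; ring.
Qed.

Lemma line_in_Z_shear_x s a b c d e A B C D E :
  line_in_Z a b c d e A B C D E ->
  line_in_Z a (4 * a * s + b) (6 * a * s ^+ 2 + 3 * b * s + c)
    (4 * a * s ^+ 3 + 3 * b * s ^+ 2 + 2 * c * s + d)
    (a * s ^+ 4 + b * s ^+ 3 + c * s ^+ 2 + d * s + e)
    A (4 * A * s + B) (6 * A * s ^+ 2 + 3 * B * s + C)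
    (4 * A * s ^+ 3 + 3 * B * s ^+ 2 + 2 * C * s + D)
    (A * s ^+ 4 + B * s ^+ 3 + C * s ^+ 2 + D * s + E).
Proof.
by move=> L t; have [LI LJ] := L t; split; [rewrite -LI /invI | rewrite -LJ /invJ]; ring.
Qed.

Lemma line_in_Z_swap a b c d e A B C D E :
  line_in_Z a b c d e A B C D E -> line_in_Z e (- d) c (- b) a E (- D) C (- B) A.
Proof.
by move=> L t; have [LI LJ] := L t; split; [rewrite -LI /invI | rewrite -LJ /invJ]; ring.
Qed.

Lemma line_in_Z_dir_b a b c d e B D E :
  B != 0 -> line_in_Z a b c d e 0 B 0 D E -> 4 * I ^+ 3 - J ^+ 2 = 0.
Proof.
move=> B_neq0 L; have [null_I null_J] := line_in_Z_null_dir L.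
have D0 : D = 0.
  apply: (natr_mulf_eq0 (n := 3) _ B_neq0) => //.
  by rewrite -[RHS]oppr0 -null_I /invI; ring.
have E0 : E = 0.
  apply: (natr_mulf_eq0 (n := 27) _ (expf_neq0 2 B_neq0)) => //.
  by rewrite -[RHS]oppr0 -null_J /invJ D0; ring.
have d0 : d = 0.
  have LI t : - invI a b c d e + (3 * B * d) * t + 0 * t ^+ 2 + 0 * t ^+ 3 = - I.
    by rewrite -(L t).1 /invI D0 E0; ring.
  by case: (cubic_const_coefs LI) => /natr_mulf_eq0 -> //.
have e0 : e = 0.
  have LJ t : - invJ a b c d e + (54 * b * B * e) * t + (27 * B ^+ 2 * e) * t ^+ 2
               + 0 * t ^+ 3 = - J.
    by rewrite -(L t).2 /invJ d0 D0 E0; ring.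
  by case: (cubic_const_coefs LJ) => _ /natr_mulf_eq0 -> //; exact: expf_neq0.
by have [<- <-] := L 0; rewrite /invI /invJ d0 e0; ring.
Qed.

Lemma line_in_Z_dir_e a b c d e E :
  E != 0 -> line_in_Z a b c d e 0 0 0 0 E -> 4 * I ^+ 3 - J ^+ 2 = 0.
Proof.
move=> E_neq0 L.
have a0 : a = 0.
  have LI t : invI a b c d e + (12 * E * a) * t + 0 * t ^+ 2 + 0 * t ^+ 3 = I.
    by rewrite -(L t).1 /invI; ring.
  by case: (cubic_const_coefs LI) => /natr_mulf_eq0 -> //.
have b0 : b = 0.
  have LJ t : - invJ a b c d e + (27 * E * b ^+ 2) * t + 0 * t ^+ 2 + 0 * t ^+ 3 = - J.
    by rewrite -(L t).2 /invJ a0; ring.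
  case: (cubic_const_coefs LJ) => /(natr_mulf_eq0 (n := 27) isT E_neq0) /eqP + _ _.
  by rewrite sqrf_eq0 => /eqP.
by have [<- <-] := L 0; rewrite /invI /invJ a0 b0; ring.
Qed.

Lemma line_in_Z_dir_d a b c d e D E :
  D != 0 -> line_in_Z a b c d e 0 0 0 D E -> 4 * I ^+ 3 - J ^+ 2 = 0.
Proof.
move=> D_neq0 L.
have a0 : a = 0.
  have LJ t : - invJ a b c d e
              + (54 * a * d * D + 27 * b ^+ 2 * E - 72 * a * c * E - 9 * b * c * D) * t
              + (27 * D ^+ 2 * a) * t ^+ 2 + 0 * t ^+ 3 = - J.
    by rewrite -(L t).2 /invJ; ring.
  by case: (cubic_const_coefs LJ) => _ /natr_mulf_eq0 -> //; exact: expf_neq0.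
have b0 : b = 0.
  have LI t : - invI a b c d e + (3 * D * b) * t + 0 * t ^+ 2 + 0 * t ^+ 3 = - I.
    by rewrite -(L t).1 /invI a0; ring.
  by case: (cubic_const_coefs LI) => /natr_mulf_eq0 -> //.
by have [<- <-] := L 0; rewrite /invI /invJ a0 b0; ring.
Qed.

Lemma line_in_Z_dir_a0 a b c d e B C D E :
  [|| B != 0, C != 0, D != 0 | E != 0] -> line_in_Z a b c d e 0 B C D E ->
  4 * I ^+ 3 - J ^+ 2 = 0.
Proof.
move=> v_neq0 L; have [B0 | B_neq0] := eqVneq B 0.
  have C0 : C = 0.
    have [null_I _] := line_in_Z_null_dir L.
    by apply/eqP; rewrite -sqrf_eq0 -null_I /invI B0; apply/eqP; ring.
  move: v_neq0 L; rewrite B0 C0 /= => DE_neq0 L.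
  have [D0 | D_neq0] := eqVneq D 0; last exact: line_in_Z_dir_d D_neq0 L.
  by move: DE_neq0 L; rewrite D0 eqxx; apply: line_in_Z_dir_e.
(* x -> x + s y with s = - C / (3 B) clears the coefficient of x^2 y^2. *)
have := line_in_Z_shear_x (- C / (3 * B)) L.
have -> : 6 * 0 * (- C / (3 * B)) ^+ 2 + 3 * B * (- C / (3 * B)) + C = 0 by field.
by rewrite !mulr0 !mul0r !add0r; apply: line_in_Z_dir_b.
Qed.

End LinesInZ.

Theorem theoremC1 (I J : CC) (hIJ : 4 * I ^+ 3 - J ^+ 2 != 0) :
  ~ exists (al be ga de ep A B C D E : CC),
      [|| A != 0, B != 0, C != 0, D != 0 | E != 0] /\
      forall t : CC,
        inZ I J (al + t * A) (be + t * B) (ga + t * C) (de + t * D) (ep + t * E).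
Proof.
move=> [al] [be] [ga] [de] [ep] [A] [B] [C] [D] [E] [v_neq0 L].
move/eqP: hIJ; apply.
have [E0 | E_neq0] := eqVneq E 0.
  subst E; apply: line_in_Z_dir_a0 (line_in_Z_swap L).
  move: v_neq0; rewrite eqxx orbF !oppr_eq0.
  by case/or4P => ->; rewrite ?orbT.
have [r Ar] := quartic_has_root A B C D E_neq0.
have := line_in_Z_shear_y r L; rewrite Ar.
by apply: line_in_Z_dir_a0; rewrite E_neq0 !orbT.
Qed.
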